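(* For the Byzantine-tolerant algorithm described in the context, under the fair distributed daemon and any Byzantine behaviour: if $\gamma$ is a degree-stabilized configuration such that $I_\gamma$ is not a maximal independent set of the subgraph induced by $V_2\cup I_\gamma$, then the configuration $\gamma'$ reached after two rounds starting from $\gamma$ satisfies $I_\gamma\subsetneq I_{\gamma'}$ with probability at least $\frac{1}{(\Delta+1)e}$.
   Context: Network and model. $G=(V,E)$ is a finite simple undirected graph; $N(u)$ is the open neighbourhood of $u$, $N[u]=N(u)\cup\{u\}$, $\deg(u)=|N(u)|$, $\Delta=\max_{u\in V}\deg(u)$. Nodes are anonymous. Each node holds local variables; a configuration is an assignment of values to all local variables. A rule ''guard $\to$ command'' is enabled on $u$ in $\gamma$ if its guard (a predicate on the variables of $u$ and its neighbours) holds; its command rewrites only $u$'s variables, possibly randomly. $u$ is activable if some rule is enabled on it. A transition $\gamma\xrightarrow{t}\gamma'$ is given by a nonempty set $t$ of moves $(u,r)$ with $r$ enabled on $u$ in $\gamma$, at most one per node, all executed simultaneously from the values in $\gamma$, with independent random choices. An execution is a sequence of consecutive transitions chosen by a daemon. The fair distributed daemon may choose any such $t$, subject to fairness: no node may remain activable forever without being activated. Probabilities are in the worst case over the daemon's and Byzantine nodes' strategies. Rounds. The rounds of an execution are consecutive segments of transitions: the first round starts at the beginning of the execution, each subsequent round starts immediately after the previous one ends, and the current round ends as soon as every node $u\in V$ has either been activated in at least one transition of the round or been non-activable in at least one configuration of the round. Byzantine nodes. A subset $B\subseteq V$ consists of Byzantine nodes: always activable and, when activated, they may set their variables to arbitrary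 values. $d(u,B)$ is the graph distance from $u$ to $B$ and $V_i=\{u\in V: d(u,B)>i\}$. Algorithm. Each node $u$ has variables $s_u\in\{\bot,\top\}$ and $x_u\in\mathbb{N}$; $Rand(q)$ returns $1$ with probability $q$, else $0$, independently. Non-Byzantine nodes follow the rules: (Refresh) $x_u\neq \deg(u)\ \to\ x_u:=\deg(u)$. (Candidacy?) $x_u=\deg(u)\wedge s_u=\bot\wedge \forall v\in N(u),\ s_v=\bot\ \to$ if $Rand\big(\frac{1}{1+\max\{x_v: v\in N[u]\}}\big)=1$ then $s_u:=\top$. (Withdrawal) $x_u=\deg(u)\wedge s_u=\top\wedge \exists v\in N(u),\ s_v=\top\ \to\ s_u:=\bot$. For a configuration $\gamma$, $I_\gamma=\{u\in V_1: s_u^\gamma=\top \text{ and } \forall v\in N(u),\ s_v^\gamma=\bot\}$. $\gamma$ is degree-stabilized if $x_u^\gamma=\deg(u)$ for every non-Byzantine node $u$. *)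

From HB Require Import structures.
From mathcomp Require Import all_boot all_order all_algebra.
From mathcomp Require Import reals sequences exp.
Set Implicit Arguments. Unset Strict Implicit. Unset Printing Implicit Defensive.
Import Order.TTheory GRing.Theory Num.Theory.
Local Open Scope ring_scope.

(* A configuration: for each node u, the pair (s_u, x_u), where
   s_u = true encodes "top" and s_u = false encodes "bot". *)
Definition config (V : finType) := V -> bool * nat.

Section Model.
Variables (V : finType) (adj : rel V) (B : {set V}).

Definition nbrs (u : V) : {set V} := [set v | adj u v].
Definition cnbrs (u : V) : {set V} := u |: nbrs u.
Definition deg (u : V) : nat := #|nbrs u|.
Definition maxdeg : nat := \max_(u : V) deg u.

(* near k u  <->  d(u,B) <= k ;  V_k = nodes with d(u,B) > k *)
Fixpoint near (k : nat) (u : V) : bool :=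
  if k is k'.+1 then near k' u || [exists v, adj u v && near k' v]
  else u \in B.
Definition Vgt (k : nat) : {set V} := [set u | ~~ near k u].

Definition sv (g : config V) u := (g u).1.
Definition xv (g : config V) u := (g u).2.

Definition refreshG (g : config V) u := xv g u != deg u.
Definition candG (g : config V) u :=
  [&& xv g u == deg u, ~~ sv g u & [forall v, adj u v ==> ~~ sv g v]].
Definition withdrawG (g : config V) u :=
  [&& xv g u == deg u, sv g u & [exists v, adj u v && sv g v]].

Definition activable (g : config V) u :=
  (u \in B) || [|| refreshG g u, candG g u | withdrawG g u].
Definition activ (g : config V) : {set V} := [set u | activable g u].
Definition nonactiv (g : config V) : {set V} := [set u | ~~ activable g u].

Definition degree_stabilized (g : config V) :=
  forall u, u \notin B -> xv g u = deg u.

Definition Iset (g : config V) : {set V} :=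
  [set u in Vgt 1 | sv g u && [forall v, adj u v ==> ~~ sv g v]].

Definition indep_in (W S : {set V}) :=
  (S \subset W) /\ (forall u v, u \in S -> v \in S -> ~~ adj u v).
Definition maximal_indep_in (W S : {set V}) :=
  indep_in W S /\ (forall S' : {set V}, S \proper S' -> ~ indep_in W S').

(* A (deterministic, history-dependent) adversary: the daemon chooses the set
   of activated nodes and the Byzantine nodes choose their new values, as
   functions of the past configurations and of the current configuration. *)
Record strategy := Strategy {
  sched : seq (config V) -> config V -> {set V};
  byzv : seq (config V) -> config V -> V -> bool * nat }.

Definition admissible (st : strategy) :=
  forall h g, sched st h g \subset activ g /\
              (activ g != set0 -> sched st h g != set0).

(* Result of a transition activating t, with Byzantine values bv, where S is
   the set of Candidacy moves whose Rand returned 1. *)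
Definition step (g : config V) (t : {set V}) (bv : V -> bool * nat)
    (S : {set V}) : config V :=
  fun u =>
    if u \notin t then g u
    else if u \in B then bv u
    else if refreshG g u then (sv g u, deg u)
    else if candG g u then (u \in S, xv g u)
    else if withdrawG g u then (false, xv g u)
    else g u.

Definition candset (g : config V) (t : {set V}) : {set V} :=
  [set u in t | (u \notin B) && candG g u].

Section Prob.
Variable R : realType.

(* parameter of Rand in Candidacy: 1 / (1 + max {x_v : v in N[u]}) *)
Definition qprob (g : config V) (u : V) : R :=
  ((1 + \max_(v in cnbrs u) xv g v)%N%:R)^-1.

Definition weight (g : config V) (C S : {set V}) : R :=
  \prod_(u in C) (if u \in S then qprob g u else 1 - qprob g u).

Variable st : strategy.
Variable goal : config V -> bool.

(* reach n h g r done : probability that, from the current configuration g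
   (past configurations h), with r rounds already completed and "done" the set
   of nodes that, in the current round, were activated or non-activable in
   some configuration, the execution completes its 2nd round within at most
   n further transitions and the configuration at the end of the 2nd round
   satisfies goal.  A terminal configuration (no activable node) ends all
   rounds. *)
Fixpoint reach (n : nat) (h : seq (config V)) (g : config V) (r : nat)
    (done : {set V}) : R :=
  if (2 <= r)%N then (goal g)%:R
  else if activ g == set0 then (goal g)%:R
  else if n is n'.+1 then
    let t := sched st h g in
    let C := candset g t in
    \sum_(S : {set V} | S \subset C)
      weight g C S *
      (let g' := step g t (byzv st h g) S in
       let done' := done :|: t :|: nonactiv g' in
       if done' == setT then reach n' (rcons h g) g' r.+1 (nonactiv g')
       else reach n' (rcons h g) g' r done')
  else 0.

Definition reach0 (n : nat) (g0 : config V) : R :=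
  reach n [::] g0 0 (nonactiv g0).

End Prob.
End Model.

From HB Require Import structures.
From mathcomp Require Import all_boot all_order all_algebra.
From mathcomp Require Import reals sequences exp.
From Stdlib Require Import Classical.
From mathcomp Require Import ring lra.
Set Implicit Arguments. Unset Strict Implicit. Unset Printing Implicit Defensive.
Import Order.TTheory GRing.Theory Num.Theory.
Local Open Scope ring_scope.

(* Since I_g0 is not maximal in V_2 + I_g0, some v in V_2 has a closed
   neighbourhood N[v] disjoint from I_g0.  Members of I never move once the
   degrees are stabilized, so I only grows.  As long as no node of V_1 executes
   Candidacy, N[v] can only lose top; a non-activable top node of N[v] would
   already be in I, so N[v] is all bot by the end of the first round, and v is
   then enabled for Candidacy and must move during the second round.  Hence
   within two rounds some u in V_1 executes Candidacy, and with probability at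
   least q_u * prod_(w ~ u) (1 - q_w) >= (1 - 1/(deg u + 1))^(deg u) / (Delta + 1)
   >= 1 / ((Delta + 1) e) it is the only node of N[u] to pick top, joining I. *)

Lemma sum_subset_prod (R : comPzSemiRingType) (T : finType) (C : {set T})
    (a b : T -> R) :
  \sum_(S : {set T} | S \subset C) \prod_(u in C) (if u \in S then a u else b u)
  = \prod_(u in C) (a u + b u).
Proof.
have -> : \prod_(u in C) (a u + b u) = \prod_u
    ((if u \in C then a u else 0) + (if u \in C then b u else 1)).
  by rewrite big_mkcond; apply: eq_bigr => u _; case: ifP; rewrite ?add0r.
rewrite (@bigA_distr R 0 1 *%R +%R).
rewrite [X in _ = X](bigID (fun S : {set T} => S \subset C)) /=.
rewrite [X in _ + X]big1 ?addr0 => [|S /subsetPn[u uS uNC]]; last first.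
  by rewrite (bigD1 u) //= uS (negbTE uNC) mul0r.
apply: eq_bigr => S /subsetP SC; rewrite big_mkcond /=; apply: eq_bigr => u _.
by case: ifP => [uC | uNC]; case: ifP => // /SC; rewrite uNC.
Qed.

Lemma expRN1_le_pow (R : realType) (d : nat) :
  expR (-1) <= (1 - (d.+1%:R)^-1) ^+ d :> R.
Proof.
case: d => [|d]; first by rewrite expr0 expR_le1 oppr_le0.
have -> : 1 - (d.+2%:R)^-1 = (1 + (d.+1%:R)^-1)^-1 :> R.
  rewrite -natr1; have : 0 < d.+1%:R :> R by [].
  by move: (d.+1%:R) => x x0; field; rewrite !gt_eqF //; lra.
have dinv : 0 <= d.+1%:R^-1 :> R by rewrite invr_ge0.
rewrite exprVn expRN lef_pV2 ?posrE ?exprn_gt0 ?expR_gt0 ?ltr_wpDr //.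
have -> : expR 1 = expR (d.+1%:R^-1) ^+ d.+1 :> R.
  by rewrite -expRM_natr mulVf ?pnatr_eq0.
by rewrite lerXn2r ?nnegrE ?expR_ge1Dx ?expR_ge0 ?addr_ge0.
Qed.

Section IsolatedSuccess.
Variables (R : comPzRingType) (T : finType) (e : rel T) (p : T -> R).
Hypothesis e_irr : irreflexive e.
Variables (C : {set T}) (u : T).
Hypothesis uC : u \in C.

Let isolated (S : {set T}) := (u \in S) && [forall w, e u w ==> (w \notin S)].
Let ea x : R := (~~ e u x)%:R.
Let eb x : R := (x != u)%:R.

Lemma isolated_prod (S : {set T}) : S \subset C ->
  (isolated S)%:R = \prod_(x in C) (if x \in S then ea x else eb x).
Proof.
move=> /subsetP SC; rewrite /isolated.
have [uS | uNS] /= := boolP (u \in S); last first.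
  by rewrite (bigD1 u) //= (negbTE uNS) /eb eqxx mul0r.
have [/forallP isoS | /forallPn[w]] /= := boolP [forall w, e u w ==> (w \notin S)].
  rewrite big1 // => x _; rewrite /ea /eb; case: ifP => [xS | /negbT xNS].
    by have := isoS x; rewrite xS implybF => ->.
  by case: eqP xNS => [-> | _]; rewrite ?uS.
rewrite negb_imply negbK => /andP[euw wS].
by rewrite (bigD1 w) ?SC //= wS /ea euw mul0r.
Qed.

Lemma sum_subset_isolated :
  \sum_(S : {set T} | S \subset C)
     (\prod_(x in C) (if x \in S then p x else 1 - p x)) * (isolated S)%:R
  = p u * \prod_(x in C | e u x) (1 - p x).
Proof.
transitivity (\sum_(S : {set T} | S \subset C)
    \prod_(x in C) (if x \in S then p x * ea x else (1 - p x) * eb x)).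
  apply: eq_bigr => S SC; rewrite isolated_prod // -big_split.
  by apply: eq_bigr => x _; case: ifP.
rewrite sum_subset_prod (bigD1 u) //= /ea /eb e_irr eqxx mulr1 mulr0 addr0.
congr (_ * _); rewrite big_mkcond [RHS]big_mkcond; apply: eq_bigr => x _ /=.
case: (x \in C) => //=; case: eqP => [-> | _]; first by rewrite e_irr.
by case: (e u x); rewrite /= ?mulr0 ?mulr1 ?add0r // addrC subrK.
Qed.

End IsolatedSuccess.

Section Model.
Variables (V : finType) (adj : rel V) (B : {set V}).
Hypotheses (adj_sym : symmetric adj) (adj_irr : irreflexive adj).

Local Notation Vgt := (Vgt adj B).
Local Notation stab := (degree_stabilized adj B).
Local Notation step := (step adj B).
Local Notation Iset := (Iset adj B).

Lemma Vgt0 u : (u \in Vgt 0) = (u \notin B).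
Proof. by rewrite inE. Qed.

Lemma Vgt_cnbrs k u w : u \in Vgt k.+1 -> w \in cnbrs adj u -> w \in Vgt k.
Proof.
rewrite /cnbrs !inE /= negb_or => /andP[uk /existsPn uNnear] /predU1P[-> // | uw].
by have := uNnear w; rewrite uw.
Qed.

Lemma Vgt1_cnbrs_notin u w : u \in Vgt 1 -> w \in cnbrs adj u -> w \notin B.
Proof. by move=> u1 /(Vgt_cnbrs u1); rewrite Vgt0. Qed.

Lemma cnbrs_self u : u \in cnbrs adj u.
Proof. exact: setU11. Qed.

Lemma nbrs_cnbrs u w : adj u w -> w \in cnbrs adj u.
Proof. by move=> uw; rewrite !inE uw orbT. Qed.

Section Step.
Variables (g : config V) (t : {set V}) (bv : V -> bool * nat) (S : {set V}).
Hypothesis g_stab : stab g.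
Let g' := step g t bv S.

Lemma step_stab : stab g'.
Proof.
move=> u uNB; rewrite /xv /g' /step; case: ifP => ut; first exact: g_stab.
rewrite (negbTE uNB) /refreshG g_stab // eqxx /=.
by case: ifP => _ //; case: ifP => _ //; exact: g_stab.
Qed.

Lemma sv_step u : u \notin B -> sv g' u =
  if u \in t then (if candG adj g u then u \in S else sv g u && ~~ withdrawG adj g u)
  else sv g u.
Proof.
move=> uNB; rewrite /sv /g' /step /=; case: (u \in t) => //=.
rewrite (negbTE uNB) /refreshG g_stab // eqxx /=.
by case: ifP => // _; case: ifP => /=; rewrite ?andbT ?andbF.
Qed.

Lemma sv_step_idle u : u \notin B -> ~~ candG adj g u -> ~~ withdrawG adj g u ->
  sv g' u = sv g u.
Proof.
by move=> uNB /negbTE uNcand /negbTE uNwd; rewrite sv_step // uNcand uNwd andbT if_same.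
Qed.

Lemma Iset_step : Iset g \subset Iset g'.
Proof.
apply/subsetP => u; rewrite !inE => /and3P[u1n su /forallP uiso].
have u1 : u \in Vgt 1 by rewrite inE.
have nbr_bot w : adj u w -> ~~ sv g w by move=> uw; have := uiso w; rewrite uw.
have sv_u : sv g' u = sv g u.
  rewrite sv_step_idle ?(Vgt1_cnbrs_notin u1 (cnbrs_self u)) //.
    by rewrite /candG su andbF.
  rewrite /withdrawG su /= negb_and; apply/orP; right.
  by apply/existsPn => w; rewrite negb_and -implybE; exact/implyP/nbr_bot.
rewrite u1n sv_u su /=; apply/forallP => w; apply/implyP => uw.
rewrite sv_step_idle ?(Vgt1_cnbrs_notin u1 (nbrs_cnbrs uw)) ?nbr_bot //.
  rewrite /candG negb_and; apply/orP; right; rewrite negb_and; apply/orP; right.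
  by apply/forallPn; exists u; rewrite adj_sym uw negbK.
by rewrite /withdrawG (negbTE (nbr_bot w uw)) andbF.
Qed.

Lemma sv_step_noncand u : t \subset activ adj B g -> u \notin B ->
  u \notin candset adj B g t -> sv g' u -> sv g u && (u \notin t).
Proof.
move=> /subsetP t_act uNB; rewrite sv_step // inE uNB /=.
case ut: (u \in t) => /=; last by rewrite andbT.
move=> /negbTE ucand; rewrite ucand => /andP[_ /negP []].
have := t_act u ut; rewrite inE /activable (negbTE uNB) /refreshG.
by rewrite g_stab // eqxx ucand.
Qed.

Lemma Iset_step_isolated u : u \in candset adj B g t -> u \in Vgt 1 ->
  u \in S -> (forall w, adj u w -> w \notin S) -> u \in Iset g'.
Proof.
rewrite inE => /and3P[ut uNB ucand] u1 uS uiso.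
have /and3P[_ su /forallP nbr_bot] := ucand.
rewrite inE u1 sv_step // ut ucand uS /=; apply/forallP => w; apply/implyP => uw.
have wNB := Vgt1_cnbrs_notin u1 (nbrs_cnbrs uw).
have swN : ~~ sv g w by have := nbr_bot w; rewrite uw.
rewrite sv_step // (negbTE swN) andFb; case: ifP => // _; case: ifP => // _.
exact: uiso.
Qed.

End Step.

Lemma candG_cnbrs_bot (g : config V) u : stab g -> u \notin B ->
  (forall w, w \in cnbrs adj u -> ~~ sv g w) -> candG adj g u.
Proof.
move=> g_stab uNB cnbrs_bot; rewrite /candG g_stab // eqxx cnbrs_bot ?cnbrs_self //=.
by apply/forallP => w; apply/implyP => uw; exact/cnbrs_bot/nbrs_cnbrs.
Qed.

Lemma Iset_nonadj (g : config V) u w : u \in Iset g -> w \in Iset g -> ~~ adj u w.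
Proof.
rewrite !inE => /and3P[_ _ /forallP uiso] /and3P[_ sw _].
by apply/negP => uw; have := uiso w; rewrite uw sw.
Qed.

Section Probability.
Variable R : realType.

Local Notation qprob := (qprob adj R).
Local Notation weight := (weight adj R).

Lemma qprob_gt0 (g : config V) u : 0 < qprob g u.
Proof. by rewrite invr_gt0 ltr0n. Qed.

Lemma qprob_le1 (g : config V) u : qprob g u <= 1.
Proof. by rewrite invf_le1 ?ltr0n // ler1n. Qed.

Lemma weight_ge0 (g : config V) (C S : {set V}) : 0 <= weight g C S.
Proof.
apply: prodr_ge0 => u _; case: ifP => _; first exact/ltW/qprob_gt0.
by rewrite subr_ge0 qprob_le1.
Qed.

Lemma weight_sum1 (g : config V) (C : {set V}) :
  \sum_(S : {set V} | S \subset C) weight g C S = 1.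
Proof. by rewrite sum_subset_prod; apply: big1 => u _; rewrite addrC subrK. Qed.

Lemma sum_weight_le (g : config V) (C : {set V}) (X : {set V} -> R) (c : R) :
  (forall S : {set V}, S \subset C -> X S <= c) ->
  \sum_(S : {set V} | S \subset C) weight g C S * X S <= c.
Proof.
move=> X_le; rewrite -[c]mul1r -(weight_sum1 g C) big_distrl /=.
by apply: ler_sum => S SC; rewrite ler_wpM2l ?weight_ge0 ?X_le.
Qed.

Lemma qprob_ge_maxdeg (g : config V) u :
  stab g -> (forall w, w \in cnbrs adj u -> w \notin B) ->
  ((maxdeg adj)%:R + 1)^-1 <= qprob g u.
Proof.
move=> g_stab cnbrsNB; rewrite natr1 lef_pV2 ?posrE ?ltr0n // ler_nat add1n ltnS.
by apply/bigmax_leqP => w wu; rewrite g_stab ?cnbrsNB //; exact: leq_bigmax.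
Qed.

Lemma qprob_nbr_le (g : config V) u x : stab g -> u \notin B -> adj u x ->
  qprob g x <= ((deg adj u).+1%:R)^-1.
Proof.
move=> g_stab uNB ux; rewrite lef_pV2 ?posrE ?ltr0n // add1n ler_nat ltnS.
rewrite -(g_stab u uNB).
by apply: (leq_bigmax_cond (F := xv g)); rewrite adj_sym in ux; exact: nbrs_cnbrs.
Qed.

Lemma isolated_success_ge (g : config V) (C : {set V}) u :
  stab g -> u \in C -> u \in Vgt 1 ->
  ((maxdeg adj)%:R + 1)^-1 * (expR 1)^-1 <=
  \sum_(S : {set V} | S \subset C)
     weight g C S * ((u \in S) && [forall w, adj u w ==> (w \notin S)])%:R.
Proof.
move=> g_stab uC u1; rewrite (sum_subset_isolated (qprob g) adj_irr uC).
have uNB := Vgt1_cnbrs_notin u1 (cnbrs_self u).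
set c : R := 1 - ((deg adj u).+1%:R)^-1.
have c_ge0 : 0 <= c by rewrite subr_ge0 invf_le1 ?ler1n.
apply: ler_pM; rewrite ?invr_ge0 ?expR_ge0 ?addr_ge0 //.
  by apply: qprob_ge_maxdeg => // w; exact: Vgt1_cnbrs_notin.
rewrite -expRN (le_trans (expRN1_le_pow _ (deg adj u))) //.
apply: (@le_trans _ _ (\prod_(x in C | adj u x) c)).
  rewrite prodr_const ler_wiXn2l // ?lerBlDr ?lerDl ?invr_ge0 //.
  by apply/subset_leq_card/subsetP => x /andP[_ ux]; rewrite inE.
apply: ler_prod => x /andP[_ ux]; rewrite c_ge0 lerD2l lerN2.
exact: qprob_nbr_le.
Qed.

Lemma sum_weight_isolated_le (g : config V) (C : {set V}) u (X : {set V} -> R) :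
  stab g -> u \in C -> u \in Vgt 1 -> (forall S : {set V}, S \subset C -> X S <= 1) ->
  (forall S : {set V}, u \in S -> (forall w, adj u w -> w \notin S) -> X S = 0) ->
  \sum_(S : {set V} | S \subset C) weight g C S * X S <=
  1 - ((maxdeg adj)%:R + 1)^-1 * (expR 1)^-1.
Proof.
move=> g_stab uC u1 X_le1 X_iso.
pose iso (S : {set V}) : R := ((u \in S) && [forall w, adj u w ==> (w \notin S)])%:R.
apply: (@le_trans _ _ (\sum_(S : {set V} | S \subset C) weight g C S * (1 - iso S))).
  apply: ler_sum => S SC; rewrite ler_wpM2l ?weight_ge0 // /iso.
  case: andP => [[uS /forallP uiso] | _]; last by rewrite subr0 X_le1.
  by rewrite X_iso ?subrr // => w uw; have := uiso w; rewrite uw.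
under eq_bigr => S _ do rewrite mulrBr mulr1.
by rewrite sumrB weight_sum1 lerD2l lerN2; exact: isolated_success_ge.
Qed.

End Probability.

Section Reach.
Variables (R : realType) (st : strategy V).

Local Notation reach := (reach adj B R st).

Lemma reachS goal n h g r done : reach goal n.+1 h g r done =
  if (2 <= r)%N then (goal g)%:R
  else if activ adj B g == set0 then (goal g)%:R
  else
    let t := sched st h g in
    let C := candset adj B g t in
    \sum_(S : {set V} | S \subset C)
      weight adj R g C S *
      (let g' := step g t (byzv st h g) S in
       let done' := done :|: t :|: nonactiv adj B g' in
       if done' == setT then reach goal n (rcons h g) g' r.+1 (nonactiv adj B g')
       else reach goal n (rcons h g) g' r done').
Proof. by []. Qed.

Lemma reach_le1 goal n h g r done : reach goal n h g r done <= 1.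
Proof.
elim: n h g r done => [|n IH] h g r done.
  by rewrite /=; case: ifP => _; [|case: ifP => _]; rewrite ?ler01 ?lern1 ?leq_b1.
rewrite reachS; case: ifP => _; first by rewrite lern1 leq_b1.
case: ifP => _; first by rewrite lern1 leq_b1.
by apply: sum_weight_le => S _ /=; case: ifP.
Qed.

Lemma reach_predC goal n h g r done :
  reach goal n h g r done + reach (fun g => ~~ goal g) n h g r done =
  reach (fun _ => true) n h g r done.
Proof.
have goalC g' : (goal g')%:R + (~~ goal g')%:R = 1 :> R.
  by case: (goal g'); rewrite ?addr0 ?add0r.
elim: n h g r done => [|n IH] h g r done.
  by rewrite /=; case: ifP => _; [|case: ifP => _]; rewrite ?goalC ?addr0.
rewrite !reachS; case: ifP => _; first exact: goalC.
case: ifP => _ /=; first exact: goalC.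
rewrite -big_split; apply: eq_bigr => S _ /=; rewrite -mulrDr.
by case: ifP => _; rewrite IH.
Qed.

Lemma reach_eq0 (P : config V -> Prop) goal :
  (forall g t bv S, P g -> P (step g t bv S)) -> (forall g, P g -> ~~ goal g) ->
  forall n h g r done, P g -> reach goal n h g r done = 0.
Proof.
move=> P_step P_goal; elim=> [|n IH] h g r done Pg; rewrite ?reachS /=;
  rewrite (negbTE (P_goal g Pg)); case: ifP => // _; case: ifP => // _.
by apply: big1 => S _; case: ifP => _; rewrite IH ?mulr0 //; exact: P_step.
Qed.

End Reach.
End Model.

Section FreeNode.
Variables (R : realType) (V : finType) (adj : rel V) (B : {set V}).
Variable st : strategy V.
Hypotheses (adj_sym : symmetric adj) (adj_irr : irreflexive adj).
Hypothesis st_adm : admissible adj B st.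
Variables (I0 : {set V}) (v : V).
Hypothesis v2 : v \in Vgt adj B 2.
Hypothesis cnbrs_v_notin : forall u, u \in cnbrs adj v -> u \notin I0.

Local Notation Vgt := (Vgt adj B).
Local Notation stab := (degree_stabilized adj B).
Local Notation step := (step adj B).
Local Notation Iset := (Iset adj B).
Local Notation activ := (activ adj B).
Local Notation nonactiv := (nonactiv adj B).
Local Notation cnbrs := (cnbrs adj).

Definition enlarged (g : config V) := I0 \proper Iset g.

Local Notation failure := (fun g => ~~ enlarged g).
Local Notation reach := (reach adj B R st failure).

Lemma reach_enlarged_eq0 n h g r done : stab g -> enlarged g -> reach n h g r done = 0.
Proof.
move=> g_stab g_enl.
apply: (@reach_eq0 _ _ _ _ _ (fun g => stab g /\ enlarged g)) => //.
- move=> g' t bv S [g'_stab g'_enl]; split; first exact: step_stab.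
  by apply: (proper_sub_trans g'_enl); exact: Iset_step.
- by move=> g' [_ ->].
Qed.

Lemma cnbrs_v_Vgt1 u : u \in cnbrs v -> u \in Vgt 1.
Proof. exact: Vgt_cnbrs. Qed.

Lemma cnbrs_v_notin_B u : u \in cnbrs v -> u \notin B.
Proof. by move=> /cnbrs_v_Vgt1 u1; apply: (Vgt1_cnbrs_notin u1); exact: cnbrs_self. Qed.

Lemma nonactivable_bot g u : stab g -> I0 \subset Iset g -> ~~ enlarged g ->
  u \in cnbrs v -> ~~ activable adj B g u -> ~~ sv g u.
Proof.
move=> g_stab I0_sub g_Nenl uv; apply: contra => su.
have uNB := cnbrs_v_notin_B uv.
have [nbr_top | /existsPn nbr_bot] := boolP [exists w, adj u w && sv g w].
  by rewrite /activable /withdrawG g_stab // eqxx su nbr_top !orbT.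
have uI : u \in Iset g.
  rewrite inE (cnbrs_v_Vgt1 uv) su; apply/forallP => w.
  by rewrite implybE -negb_and; exact: nbr_bot.
move: g_Nenl; rewrite /enlarged properE I0_sub negbK => /subsetP/(_ u uI) uI0.
by have := cnbrs_v_notin uv; rewrite uI0.
Qed.

Lemma v_candG g : stab g -> (forall u, u \in cnbrs v -> ~~ sv g u) -> candG adj g v.
Proof.
move=> g_stab cnbrs_bot; apply: (candG_cnbrs_bot (B := B)) => //.
exact/cnbrs_v_notin_B/cnbrs_self.
Qed.

Lemma activ_neq0 g : stab g -> I0 \subset Iset g -> ~~ enlarged g -> activ g != set0.
Proof.
move=> g_stab I0_sub g_Nenl; apply/negP => /eqP act0.
have Nact u : ~~ activable adj B g u by have := in_set0 u; rewrite -act0 inE => ->.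
have := Nact v; rewrite /activable v_candG ?orbT // => u uv.
exact: nonactivable_bot (Nact u).
Qed.

(* In round 1 the invariant keeps v enabled for Candidacy and not yet done, so
   that round cannot end before v executes Candidacy. *)
Definition round_inv (g : config V) (r : nat) (done : {set V}) : Prop :=
  match r with
  | 0 => forall u, u \in cnbrs v -> u \in done -> ~~ sv g u
  | 1 => (forall u, u \in cnbrs v -> ~~ sv g u) /\ v \notin done
  | _ => False
  end.

Section Transition.
Variables (g : config V) (t : {set V}) (bv : V -> bool * nat) (S : {set V}).
Let g' := step g t bv S.
Hypotheses (g_stab : stab g) (t_act : t \subset activ g).
Hypothesis no_cand_Vgt1 : forall u, u \in candset adj B g t -> u \notin Vgt 1.
Hypotheses (I0_sub' : I0 \subset Iset g') (g'_Nenl : ~~ enlarged g').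

Lemma cnbrs_v_top_step u : u \in cnbrs v -> sv g' u -> sv g u && (u \notin t).
Proof.
move=> uv.
apply: (sv_step_noncand (bv := bv) (S := S) g_stab t_act (cnbrs_v_notin_B uv)).
by apply/negP => /no_cand_Vgt1; rewrite cnbrs_v_Vgt1.
Qed.

Lemma cnbrs_v_bot_step : (forall u, u \in cnbrs v -> ~~ sv g u) ->
  forall u, u \in cnbrs v -> ~~ sv g' u.
Proof.
move=> cnbrs_bot u uv; apply/negP => /(cnbrs_v_top_step uv)/andP[su _].
by have := cnbrs_bot u uv; rewrite su.
Qed.

Lemma v_notin_sched : (forall u, u \in cnbrs v -> ~~ sv g u) -> v \notin t.
Proof.
move=> cnbrs_bot; apply/negP => vt; have := no_cand_Vgt1 (u := v).
rewrite inE vt cnbrs_v_notin_B ?cnbrs_self // v_candG // cnbrs_v_Vgt1 ?cnbrs_self //.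
by move=> /(_ isT).
Qed.

Lemma v_activable_step : (forall u, u \in cnbrs v -> ~~ sv g' u) ->
  v \notin nonactiv g'.
Proof.
by move=> cnbrs_bot; rewrite inE negbK /activable v_candG ?orbT //; exact: step_stab.
Qed.

Lemma cnbrs_v_done_bot_step (done : {set V}) :
  (forall u, u \in cnbrs v -> u \in done -> ~~ sv g u) ->
  forall u, u \in cnbrs v -> u \in done :|: t :|: nonactiv g' -> ~~ sv g' u.
Proof.
move=> done_bot u uv; rewrite !inE -orbA => /or3P[ud | ut | u_Nact].
- apply/negP => /(cnbrs_v_top_step uv)/andP[su _].
  by have := done_bot u uv ud; rewrite su.
- by apply/negP => /(cnbrs_v_top_step uv)/andP[_]; rewrite ut.
- exact: nonactivable_bot (step_stab _ _ _ _) I0_sub' g'_Nenl uv u_Nact.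
Qed.

Lemma round_inv_step r (done : {set V}) : round_inv g r done ->
  if done :|: t :|: nonactiv g' == setT then round_inv g' r.+1 (nonactiv g')
  else round_inv g' r (done :|: t :|: nonactiv g').
Proof.
set done' := done :|: t :|: nonactiv g'.
case: r => [|[|r]] // => [done_bot | [cnbrs_bot vNd]].
  have cnbrs_bot' := cnbrs_v_done_bot_step done_bot.
  case: eqP => [all_done | _]; last exact: cnbrs_bot'.
  have {}cnbrs_bot' u : u \in cnbrs v -> ~~ sv g' u.
    by move=> uv; apply: cnbrs_bot' => //; rewrite -/done' all_done inE.
  by split; last exact: v_activable_step.
have vNd' : v \notin done'.
  rewrite /done' !in_setU (negbTE vNd) (negbTE (v_notin_sched cnbrs_bot)) /=.
  exact/v_activable_step/cnbrs_v_bot_step.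
case: eqP => [all_done | _]; first by rewrite all_done inE in vNd'.
by split; first exact: cnbrs_v_bot_step.
Qed.

End Transition.

Lemma enlarged_step_isolated g (t : {set V}) bv (S : {set V}) u :
  stab g -> I0 \subset Iset g ->
  u \in candset adj B g t -> u \in Vgt 1 -> u \in S ->
  (forall w, adj u w -> w \notin S) -> enlarged (step g t bv S).
Proof.
move=> g_stab I0_sub uC u1 uS uiso; apply/properP; split.
  by apply: (subset_trans I0_sub); exact: Iset_step.
exists u; first exact: Iset_step_isolated.
apply/negP => /(subsetP I0_sub); rewrite inE => /and3P[_ su _].
by move: uC; rewrite inE /candG su !andbF.
Qed.

Local Notation success_bound := (((maxdeg adj)%:R + 1)^-1 * (expR 1)^-1 : R).

Lemma success_bound_le1 : success_bound <= 1.
Proof.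
rewrite mulr_ile1 ?invr_ge0 ?expR_ge0 ?addr_ge0 // invf_le1 ?lerDr //.
- by rewrite ltr_wpDl.
- by apply/ltW; rewrite expR_gt1.
- by rewrite expR_gt0.
Qed.

Lemma reach_failure_le n h g r done : stab g -> I0 \subset Iset g ->
  round_inv g r done -> reach n h g r done <= 1 - success_bound.
Proof.
elim: n h g r done => [|n IH] h g r done g_stab I0_sub g_inv;
  have r_lt2 : (2 <= r)%N = false by case: r g_inv => [|[|]].
all: have [g_enl | g_Nenl] := boolP (enlarged g);
  first by rewrite reach_enlarged_eq0 // subr_ge0 success_bound_le1.
all: have activ_g := negbTE (activ_neq0 g_stab I0_sub g_Nenl).
  by rewrite /= r_lt2 activ_g subr_ge0 success_bound_le1.
rewrite reachS r_lt2 activ_g; cbv zeta.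
set t := sched st h g; set C := candset adj B g t.
have t_act : t \subset activ g by case: (st_adm h g).
(* Either a node of V_1 executes Candidacy now, or the transition preserves
   [round_inv]. *)
case: (pickP [pred u | (u \in C) && (u \in Vgt 1)]) => [u /andP[uC u1] | no_cand].
  apply: (sum_weight_isolated_le adj_sym adj_irr g_stab uC u1) => S.
    by case: ifP => _; rewrite reach_le1.
  move=> uS uiso.
  have := enlarged_step_isolated (byzv st h g) g_stab I0_sub uC u1 uS uiso.
  by case: ifP => _ g'_enl; rewrite reach_enlarged_eq0 //; exact: step_stab.
have no_cand_Vgt1 u : u \in C -> u \notin Vgt 1.
  by move=> uC; have := no_cand u; rewrite /= uC => /negbT.
apply: sum_weight_le => S _; set g' := step g t (byzv st h g) S.
have g'_stab : stab g' by exact: step_stab.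
have I0_sub' : I0 \subset Iset g' by apply: (subset_trans I0_sub); exact: Iset_step.
have [g'_enl | g'_Nenl] := boolP (enlarged g').
  by case: ifP => _; rewrite reach_enlarged_eq0 // subr_ge0 success_bound_le1.
have := round_inv_step g_stab t_act no_cand_Vgt1 I0_sub' g'_Nenl g_inv.
by case: ifP => _ g'_inv; apply: IH.
Qed.

End FreeNode.

Lemma nonmaximal_free_node (V : finType) (adj : rel V) (W I : {set V}) :
  (forall u w, u \in I -> w \in I -> ~~ adj u w) ->
  ~ maximal_indep_in adj (W :|: I) I ->
  exists2 v, v \in W & forall u, u \in cnbrs adj v -> u \notin I.
Proof.
move=> I_indep I_Nmax.
have [S' I_S' [S'_sub S'_indep]] :
    exists2 S' : {set V}, I \proper S' & indep_in adj (W :|: I) S'.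
  apply: NNPP => noS'; apply: I_Nmax; split => [|S' I_S' S'_indep].
    by split; [exact: subsetUr | exact: I_indep].
  by apply: noS'; exists S'.
have /properP[I_sub [v vS' vNI]] := I_S'.
exists v; first by have := subsetP S'_sub v vS'; rewrite in_setU (negbTE vNI) orbF.
move=> u; rewrite /cnbrs !inE => /predU1P[-> // | vu]; apply/negP => uI.
by have := S'_indep v u vS' (subsetP I_sub u uI); rewrite vu.
Qed.

Theorem mainTheorem10 (R : realType) (V : finType) (adj : rel V)
    (B : {set V}) (g0 : config V) (st : strategy V) :
  symmetric adj -> irreflexive adj ->
  admissible adj B st ->
  degree_stabilized adj B g0 ->
  ~ maximal_indep_in adj (Vgt adj B 2 :|: Iset adj B g0) (Iset adj B g0) ->
  (forall eps : R, 0 < eps -> exists n : nat,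
      1 - eps <= reach0 adj B R st (fun _ => true) n g0) ->
  forall eps : R, 0 < eps -> exists n : nat,
    ((maxdeg adj)%:R + 1)^-1 * (expR 1)^-1 - eps <=
    reach0 adj B R st (fun g => Iset adj B g0 \proper Iset adj B g) n g0.
Proof.
move=> adj_sym adj_irr st_adm g0_stab I0_Nmax fair eps eps_gt0.
have [v v2 cnbrs_v_notin] := nonmaximal_free_node (@Iset_nonadj _ _ _ g0) I0_Nmax.
have [n fair_n] := fair eps eps_gt0; exists n.
have inv0 : round_inv adj v g0 0 (nonactiv adj B g0).
  move=> u uv; rewrite inE; apply: (nonactivable_bot v2 cnbrs_v_notin g0_stab) => //.
  by rewrite /enlarged properxx.
have := reach_failure_le R adj_sym adj_irr st_adm v2 cnbrs_v_notin n [::]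
  g0_stab (subxx _) inv0.
move: fair_n; rewrite /reach0.
rewrite -(reach_predC adj B R st (fun g => Iset adj B g0 \proper Iset adj B g)).
lra.
Qed.
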